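(* Let $S$ be an oriented 2-manifold diffeomorphic to the 2-torus, let $g$ and $\tilde g$ be Riemannian metrics on $S$ with codifferentials $\delta$ and $\tilde\delta$ respectively, and let $P,Q\in C^\infty(S)$ with $P,Q>0$. Define on $\Omega^1(S)$ the operators $\delta_p = P^{-1}\delta P$ and $\tilde\delta_q = Q^{-1}\tilde\delta Q$ (i.e. $\delta_p\omega = P^{-1}\delta(P\omega)$, $\tilde\delta_q\omega = Q^{-1}\tilde\delta(Q\omega)$). If $\ker\delta_p\subset\ker\tilde\delta_q$ (as subsets of $\Omega^1(S)$), then $g$ and $\tilde g$ are conformally equivalent and $P = cQ$ for some constant $c>0$. *)

(* The surface S (diffeomorphic to the 2-torus) is modelled, via a fixed
   diffeomorphism, as the standard torus R^2 / Z^2: smooth functions on S are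
   smooth functions R -> R -> R that are 1-periodic in each variable. *)
From Stdlib Require Import Reals.
From Coquelicot Require Import Coquelicot.
Open Scope R_scope.

Definition dx (f : R -> R -> R) : R -> R -> R := fun x y => Derive (fun t => f t y) x.
Definition dy (f : R -> R -> R) : R -> R -> R := fun x y => Derive (fun t => f x t) y.

Fixpoint Ck (k : nat) (f : R -> R -> R) : Prop :=
  (forall x y, continuity_2d_pt f x y) /\
  match k with
  | O => True
  | S m => (forall x y, ex_derive (fun t => f t y) x) /\
           (forall x y, ex_derive (fun t => f x t) y) /\
           Ck m (dx f) /\ Ck m (dy f)
  end.

Definition smooth (f : R -> R -> R) : Prop := forall k, Ck k f.

Definition periodic (f : R -> R -> R) : Prop :=
  forall x y, f (x + 1) y = f x y /\ f x (y + 1) = f x y.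

Definition smooth_on_torus (f : R -> R -> R) : Prop := smooth f /\ periodic f.

(* Riemannian metric g = g11 dx^2 + 2 g12 dx dy + g22 dy^2 on the torus *)
Record metric := Metric { g11 : R -> R -> R; g12 : R -> R -> R; g22 : R -> R -> R }.

Definition gdet (g : metric) : R -> R -> R :=
  fun x y => g11 g x y * g22 g x y - g12 g x y * g12 g x y.

Definition is_riemannian_metric (g : metric) : Prop :=
  smooth_on_torus (g11 g) /\ smooth_on_torus (g12 g) /\ smooth_on_torus (g22 g) /\
  (forall x y, 0 < g11 g x y) /\ (forall x y, 0 < gdet g x y).

(* 1-forms a dx + b dy; Omega^1(S) = pairs of smooth periodic functions *)
Definition is_one_form (a b : R -> R -> R) : Prop :=
  smooth_on_torus a /\ smooth_on_torus b.

(* codifferential of a 1-form: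
   delta w = - (1/sqrt G) ( d_x (sqrt G (g^11 a + g^12 b)) + d_y (sqrt G (g^21 a + g^22 b)) ) *)
Definition codiff (g : metric) (a b : R -> R -> R) : R -> R -> R :=
  fun x y =>
    let G := gdet g in
    let V1 := fun u v => sqrt (G u v) * ((g22 g u v / G u v) * a u v
                                          - (g12 g u v / G u v) * b u v) in
    let V2 := fun u v => sqrt (G u v) * (- (g12 g u v / G u v) * a u v
                                          + (g11 g u v / G u v) * b u v) in
    - / sqrt (G x y) * (dx V1 x y + dy V2 x y).

Definition wcodiff (g : metric) (P a b : R -> R -> R) : R -> R -> R :=
  fun x y => / P x y * codiff g (fun u v => P u v * a u v) (fun u v => P u v * b u v) x y.

Definition ker_incl (g gt : metric) (P Q : R -> R -> R) : Prop :=
  forall a b, is_one_form a b ->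
    (forall x y, wcodiff g P a b x y = 0) -> (forall x y, wcodiff gt Q a b x y = 0).

Definition conformally_equivalent (g gt : metric) : Prop :=
  exists lam : R -> R -> R, smooth_on_torus lam /\ (forall x y, 0 < lam x y) /\
    forall x y, g11 gt x y = lam x y * g11 g x y /\ g12 gt x y = lam x y * g12 g x y /\
                g22 gt x y = lam x y * g22 g x y.

From Stdlib Require Import Reals Lra FunctionalExtensionality.
From Coquelicot Require Import Coquelicot.
Open Scope R_scope.

(* A 1-form w lies in ker delta_P iff its P-weighted flux P sqrt G g^(-1) w is
   divergence-free on R^2/Z^2, and every smooth periodic divergence-free field is
   such a flux.  The inclusion of kernels therefore says that the matrix field
   M = Q sqrt Gt / (P sqrt G) gt^(-1) g maps divergence-free fields to
   divergence-free fields.  Constant test fields show that the columns of M are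
   divergence-free; the plane waves u sin(2 pi (p x + q y) + c) with u orthogonal
   to (p, q) then give (M u).(p, q) = 0, so M = m I, and m is constant because the
   columns of M are divergence-free.  Now M = m I means that gt is conformal to g,
   and then m = Q / P. *)

Lemma fun2_ext (f g : R -> R -> R) : (forall x y, f x y = g x y) -> f = g.
Proof.
  intros H; apply functional_extensionality; intro x.
  apply functional_extensionality; auto.
Qed.

Lemma Ck_S k f : Ck (S k) f -> Ck k f.
Proof.
  revert f; induction k as [|k IH]; intros f [Hc [Hx [Hy [H1 H2]]]].
  - split; auto.
  - repeat split; auto.
Qed.

Lemma Ck_ext k f g : (forall x y, f x y = g x y) -> Ck k f -> Ck k g.
Proof. intros H; rewrite (fun2_ext f g H); auto. Qed.

Lemma Ck_const k c : Ck k (fun _ _ => c).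
Proof.
  revert c; induction k as [|k IH]; intro c; simpl.
  - split; auto; intros; apply continuity_2d_pt_const.
  - split; [intros; apply continuity_2d_pt_const|].
    split; [intros; apply ex_derive_const|].
    split; [intros; apply ex_derive_const|].
    split; apply Ck_ext with (fun _ _ => 0); auto;
      intros; unfold dx, dy; symmetry; apply Derive_const.
Qed.

Lemma Ck_plus k f g : Ck k f -> Ck k g -> Ck k (fun x y => f x y + g x y).
Proof.
  revert f g; induction k as [|k IH]; intros f g Hf Hg.
  - split; auto. intros; apply continuity_2d_pt_plus; [apply Hf|apply Hg].
  - destruct Hf as [Hfc [Hfx [Hfy [Hf1 Hf2]]]].
    destruct Hg as [Hgc [Hgx [Hgy [Hg1 Hg2]]]].
    split; [intros; apply continuity_2d_pt_plus; auto|].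
    split; [intros; apply (ex_derive_plus (fun t => f t y) (fun t => g t y)); auto|].
    split; [intros; apply (ex_derive_plus (fun t => f x t) (fun t => g x t)); auto|].
    split.
    + apply Ck_ext with (fun x y => dx f x y + dx g x y); [|apply IH; auto].
      intros; unfold dx; rewrite Derive_plus; auto.
    + apply Ck_ext with (fun x y => dy f x y + dy g x y); [|apply IH; auto].
      intros; unfold dy; rewrite Derive_plus; auto.
Qed.

Lemma Ck_mult k f g : Ck k f -> Ck k g -> Ck k (fun x y => f x y * g x y).
Proof.
  revert f g; induction k as [|k IH]; intros f g Hf Hg.
  - split; auto. intros; apply continuity_2d_pt_mult; [apply Hf|apply Hg].
  - pose proof (Ck_S _ _ Hf) as Hfk. pose proof (Ck_S _ _ Hg) as Hgk.
    destruct Hf as [Hfc [Hfx [Hfy [Hf1 Hf2]]]].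
    destruct Hg as [Hgc [Hgx [Hgy [Hg1 Hg2]]]].
    split; [intros; apply continuity_2d_pt_mult; auto|].
    split; [intros; apply (ex_derive_mult (fun t => f t y) (fun t => g t y)); auto|].
    split; [intros; apply (ex_derive_mult (fun t => f x t) (fun t => g x t)); auto|].
    split.
    + apply Ck_ext with (fun x y => dx f x y * g x y + f x y * dx g x y);
        [|apply Ck_plus; apply IH; auto].
      intros; unfold dx; rewrite Derive_mult; auto.
    + apply Ck_ext with (fun x y => dy f x y * g x y + f x y * dy g x y);
        [|apply Ck_plus; apply IH; auto].
      intros; unfold dy; rewrite Derive_mult; auto.
Qed.

Lemma Ck_minus k f g : Ck k f -> Ck k g -> Ck k (fun x y => f x y - g x y).
Proof.
  intros Hf Hg. apply Ck_ext with (fun x y => f x y + (-1) * g x y); [intros; ring|].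
  apply Ck_plus, Ck_mult; auto using Ck_const.
Qed.

Lemma Ck_comp k (h h' : R -> R) (D : R -> Prop) f :
  (forall z, D z -> is_derive h z (h' z)) -> (forall x y, D (f x y)) ->
  Ck (S k) f -> Ck k (fun x y => h' (f x y)) -> Ck (S k) (fun x y => h (f x y)).
Proof.
  intros Hd HD Hf Hh'.
  pose proof (Ck_S _ _ Hf) as Hfk.
  destruct Hf as [Hfc [Hfx [Hfy [Hf1 Hf2]]]].
  split.
  { intros x y. apply continuity_1d_2d_pt_comp; auto.
    apply continuity_pt_filterlim.
    apply (ex_derive_continuous (K:=R_AbsRing) (V:=R_NormedModule) h).
    eexists; apply Hd; auto. }
  split.
  { intros x y. destruct (Hfx x y) as [l Hl]. eexists.
    apply (is_derive_comp h (fun t => f t y)); [apply Hd; auto|exact Hl]. }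
  split.
  { intros x y. destruct (Hfy x y) as [l Hl]. eexists.
    apply (is_derive_comp h (fun t => f x t)); [apply Hd; auto|exact Hl]. }
  split.
  - apply Ck_ext with (fun x y => dx f x y * h' (f x y)); [|apply Ck_mult; auto].
    intros x y; unfold dx. symmetry; apply is_derive_unique.
    apply (is_derive_comp h (fun t => f t y)); [apply Hd; auto|].
    apply Derive_correct; auto.
  - apply Ck_ext with (fun x y => dy f x y * h' (f x y)); [|apply Ck_mult; auto].
    intros x y; unfold dy. symmetry; apply is_derive_unique.
    apply (is_derive_comp h (fun t => f x t)); [apply Hd; auto|].
    apply Derive_correct; auto.
Qed.

Lemma Ck_comp_continuous (h : R -> R) f :
  (forall x y, continuity_pt h (f x y)) -> Ck 0 f -> Ck 0 (fun x y => h (f x y)).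
Proof.
  intros Hh Hf. split; auto. intros; apply continuity_1d_2d_pt_comp; auto. apply Hf.
Qed.

Lemma Ck_sin_cos k f :
  Ck k f -> Ck k (fun x y => sin (f x y)) /\ Ck k (fun x y => cos (f x y)).
Proof.
  revert f; induction k as [|k IH]; intros f Hf.
  - split; apply Ck_comp_continuous; auto;
      intros; [apply continuity_sin|apply continuity_cos].
  - destruct (IH f (Ck_S _ _ Hf)) as [Hs Hc]. split.
    + apply (Ck_comp k sin cos (fun _ => True)); auto.
      intros; apply is_derive_sin.
    + apply (Ck_comp k cos (fun z => - sin z) (fun _ => True)); auto.
      * intros; apply is_derive_cos.
      * apply Ck_ext with (fun x y => (-1) * sin (f x y)); [intros; ring|].
        apply Ck_mult; auto using Ck_const.
Qed.

Lemma Ck_inv k f : (forall x y, 0 < f x y) -> Ck k f -> Ck k (fun x y => / f x y).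
Proof.
  intros Hp. revert f Hp; induction k as [|k IH]; intros f Hp Hf.
  - apply Ck_comp_continuous; auto. intros x y.
    apply continuity_pt_inv; [apply continuity_pt_id|].
    specialize (Hp x y). unfold id; lra.
  - apply (Ck_comp k Rinv (fun z => - (/ z * / z)) (fun z => 0 < z)); auto.
    + intros z Hz. replace (- (/ z * / z)) with (- 1 / z ^ 2) by (field; lra).
      apply (is_derive_inv (fun t => t) z 1 (is_derive_id z)); lra.
    + apply Ck_ext with (fun x y => (-1) * ((/ f x y) * (/ f x y))); [intros; ring|].
      apply Ck_mult; [apply Ck_const|].
      apply Ck_mult; apply IH; auto; apply Ck_S; auto.
Qed.

Lemma Ck_sqrt k f : (forall x y, 0 < f x y) -> Ck k f -> Ck k (fun x y => sqrt (f x y)).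
Proof.
  intros Hp. revert f Hp; induction k as [|k IH]; intros f Hp Hf.
  - apply Ck_comp_continuous; auto. intros; apply continuity_pt_sqrt, Rlt_le, Hp.
  - apply (Ck_comp k sqrt (fun z => / 2 * / sqrt z) (fun z => 0 < z)); auto.
    + intros z Hz. assert (0 < sqrt z) by (apply sqrt_lt_R0; auto).
      replace (/ 2 * / sqrt z) with (1 / (2 * sqrt z)) by (field; lra).
      apply (is_derive_sqrt (fun t => t) z 1 (is_derive_id z) Hz).
    + apply Ck_mult; [apply Ck_const|]. apply Ck_inv.
      * intros; apply sqrt_lt_R0; auto.
      * apply IH; auto; apply Ck_S; auto.
Qed.

Lemma Ck_x k : Ck k (fun x _ => x).
Proof.
  destruct k; simpl.
  - split; auto; intros; apply continuity_2d_pt_id1.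
  - split; [intros; apply continuity_2d_pt_id1|].
    split; [intros; apply ex_derive_id|].
    split; [intros; apply ex_derive_const|].
    split.
    + apply Ck_ext with (fun _ _ => 1); [|apply Ck_const].
      intros; unfold dx; symmetry; apply Derive_id.
    + apply Ck_ext with (fun _ _ => 0); [|apply Ck_const].
      intros; unfold dy; symmetry; apply Derive_const.
Qed.

Lemma Ck_y k : Ck k (fun _ y => y).
Proof.
  destruct k; simpl.
  - split; auto; intros; apply continuity_2d_pt_id2.
  - split; [intros; apply continuity_2d_pt_id2|].
    split; [intros; apply ex_derive_const|].
    split; [intros; apply ex_derive_id|].
    split.
    + apply Ck_ext with (fun _ _ => 0); [|apply Ck_const].
      intros; unfold dx; symmetry; apply Derive_const.
    + apply Ck_ext with (fun _ _ => 1); [|apply Ck_const].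
      intros; unfold dy; symmetry; apply Derive_id.
Qed.

Lemma smooth_const c : smooth (fun _ _ => c).
Proof. intro k; apply Ck_const. Qed.

Lemma smooth_x : smooth (fun x _ => x).
Proof. intro k; apply Ck_x. Qed.

Lemma smooth_y : smooth (fun _ y => y).
Proof. intro k; apply Ck_y. Qed.

Lemma smooth_plus f g : smooth f -> smooth g -> smooth (fun x y => f x y + g x y).
Proof. intros Hf Hg k; apply Ck_plus; auto. Qed.

Lemma smooth_minus f g : smooth f -> smooth g -> smooth (fun x y => f x y - g x y).
Proof. intros Hf Hg k; apply Ck_minus; auto. Qed.

Lemma smooth_mult f g : smooth f -> smooth g -> smooth (fun x y => f x y * g x y).
Proof. intros Hf Hg k; apply Ck_mult; auto. Qed.

Lemma smooth_inv f : (forall x y, 0 < f x y) -> smooth f -> smooth (fun x y => / f x y).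
Proof. intros Hp Hf k; apply Ck_inv; auto. Qed.

Lemma smooth_div f g :
  (forall x y, 0 < g x y) -> smooth f -> smooth g -> smooth (fun x y => f x y / g x y).
Proof. intros Hp Hf Hg. apply smooth_mult, smooth_inv; auto. Qed.

Lemma smooth_sqrt f : (forall x y, 0 < f x y) -> smooth f -> smooth (fun x y => sqrt (f x y)).
Proof. intros Hp Hf k; apply Ck_sqrt; auto. Qed.

Lemma smooth_sin f : smooth f -> smooth (fun x y => sin (f x y)).
Proof. intros Hf k; apply Ck_sin_cos; auto. Qed.

Lemma smooth_ex_derive_x f : smooth f -> forall x y, ex_derive (fun t => f t y) x.
Proof. intros Hf x y. destruct (Hf 1%nat) as (_ & Hx & _). apply Hx. Qed.

Lemma smooth_ex_derive_y f : smooth f -> forall x y, ex_derive (fun t => f x t) y.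
Proof. intros Hf x y. destruct (Hf 1%nat) as (_ & _ & Hy & _). apply Hy. Qed.

Lemma smooth_on_torus_const c : smooth_on_torus (fun _ _ => c).
Proof. split; [apply smooth_const|intros x y; auto]. Qed.

Lemma smooth_on_torus_scal c f : smooth_on_torus f -> smooth_on_torus (fun x y => c * f x y).
Proof.
  intros [Hs Hp]. split; [apply smooth_mult; auto using smooth_const|].
  intros x y; destruct (Hp x y) as [-> ->]; auto.
Qed.

Definition wave (p q : nat) (c : R) : R -> R -> R :=
  fun x y => sin (2 * PI * (INR p * x + INR q * y) + c).

Lemma wave_smooth_on_torus p q c : smooth_on_torus (wave p q c).
Proof.
  split.
  - apply smooth_sin, smooth_plus, smooth_const.
    apply smooth_mult; [apply smooth_const|].
    apply smooth_plus; apply smooth_mult; auto using smooth_const, smooth_x, smooth_y.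
  - intros x y; unfold wave; split.
    + replace (2 * PI * (INR p * (x + 1) + INR q * y) + c)
        with (2 * PI * (INR p * x + INR q * y) + c + 2 * INR p * PI) by ring.
      apply sin_period.
    + replace (2 * PI * (INR p * x + INR q * (y + 1)) + c)
        with (2 * PI * (INR p * x + INR q * y) + c + 2 * INR q * PI) by ring.
      apply sin_period.
Qed.

Lemma dx_wave p q c x y :
  dx (wave p q c) x y = 2 * PI * INR p * cos (2 * PI * (INR p * x + INR q * y) + c).
Proof. unfold dx, dy, wave. apply is_derive_unique; auto_derive; auto; ring. Qed.

Lemma dy_wave p q c x y :
  dy (wave p q c) x y = 2 * PI * INR q * cos (2 * PI * (INR p * x + INR q * y) + c).
Proof. unfold dx, dy, wave. apply is_derive_unique; auto_derive; auto; ring. Qed.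

Lemma Derive_zero_const (f : R -> R) :
  (forall t, ex_derive f t) -> (forall t, Derive f t = 0) -> forall a b, f a = f b.
Proof.
  intros He Hd a b.
  destruct (MVT_gen f a b (fun _ => 0)) as [c [_ Hc]].
  - intros t _; rewrite <- (Hd t). apply Derive_correct; auto.
  - intros t _; apply continuity_pt_filterlim.
    apply (ex_derive_continuous (K:=R_AbsRing) (V:=R_NormedModule) f); auto.
  - lra.
Qed.

Lemma gradient_zero_const f : smooth f ->
  (forall x y, dx f x y = 0) -> (forall x y, dy f x y = 0) -> forall x y, f x y = f 0 0.
Proof.
  intros Hf Hx Hy x y.
  rewrite (Derive_zero_const (fun t => f t y) (fun t => smooth_ex_derive_x f Hf t y)
             (fun t => Hx t y) x 0).
  apply (Derive_zero_const (fun t => f 0 t) (fun t => smooth_ex_derive_y f Hf 0 t)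
           (fun t => Hy 0 t)).
Qed.

Definition divergence (v1 v2 : R -> R -> R) : R -> R -> R := fun x y => dx v1 x y + dy v2 x y.

Lemma Derive_scal_comb (f1 f2 h : R -> R) u1 u2 x :
  ex_derive f1 x -> ex_derive f2 x -> ex_derive h x ->
  Derive (fun t => f1 t * (u1 * h t) + f2 t * (u2 * h t)) x =
  (Derive f1 x * u1 + Derive f2 x * u2) * h x + (f1 x * u1 + f2 x * u2) * Derive h x.
Proof.
  intros H1 H2 H3. apply is_derive_unique. auto_derive; auto.
  change (fun t => f1 t) with f1; change (fun t => f2 t) with f2;
  change (fun t => h t) with h. ring.
Qed.

Section SolenoidalPreserving.

Variables m11 m12 m21 m22 : R -> R -> R.
Hypotheses (H11 : smooth m11) (H12 : smooth m12) (H21 : smooth m21) (H22 : smooth m22).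

Hypothesis preserves_solenoidal : forall v1 v2,
  smooth_on_torus v1 -> smooth_on_torus v2 -> (forall x y, divergence v1 v2 x y = 0) ->
  forall x y, divergence (fun x y => m11 x y * v1 x y + m12 x y * v2 x y)
                  (fun x y => m21 x y * v1 x y + m22 x y * v2 x y) x y = 0.

Lemma preserves_solenoidal_dir u1 u2 s : smooth_on_torus s ->
  (forall x y, u1 * dx s x y + u2 * dy s x y = 0) ->
  forall x y,
  (u1 * (dx m11 x y + dy m21 x y) + u2 * (dx m12 x y + dy m22 x y)) * s x y
  + ((m11 x y * u1 + m12 x y * u2) * dx s x y
     + (m21 x y * u1 + m22 x y * u2) * dy s x y) = 0.
Proof.
  intros Hs Hdir x y.
  pose proof (smooth_ex_derive_x s (proj1 Hs)) as Hsx.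
  pose proof (smooth_ex_derive_y s (proj1 Hs)) as Hsy.
  assert (Hdiv : forall x y, divergence (fun x y => u1 * s x y) (fun x y => u2 * s x y) x y = 0).
  { intros a b; unfold divergence, dx, dy. rewrite !Derive_scal. apply Hdir. }
  pose proof (preserves_solenoidal _ _ (smooth_on_torus_scal u1 s Hs)
              (smooth_on_torus_scal u2 s Hs) Hdiv x y) as H.
  unfold divergence, dx, dy in H |- *.
  rewrite (Derive_scal_comb (fun t => m11 t y) (fun t => m12 t y) (fun t => s t y)) in H;
    auto using smooth_ex_derive_x.
  rewrite (Derive_scal_comb (fun t => m21 x t) (fun t => m22 x t) (fun t => s x t)) in H;
    auto using smooth_ex_derive_y.
  lra.
Qed.

Lemma columns_solenoidal x y : dx m11 x y + dy m21 x y = 0 /\ dx m12 x y + dy m22 x y = 0.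
Proof.
  assert (Hconst : forall u1 u2,
      u1 * (dx m11 x y + dy m21 x y) + u2 * (dx m12 x y + dy m22 x y) = 0).
  { intros u1 u2.
    pose proof (preserves_solenoidal_dir u1 u2 _ (smooth_on_torus_const 1)) as H.
    specialize (H ltac:(intros; unfold dx, dy; rewrite !Derive_const; ring) x y).
    rewrite (Derive_const 1 x : dx (fun _ _ => 1) x y = 0),
            (Derive_const 1 y : dy (fun _ _ => 1) x y = 0) in H. lra. }
  split; [pose proof (Hconst 1 0)|pose proof (Hconst 0 1)]; lra.
Qed.

Lemma preserves_solenoidal_wave p q u1 u2 : u1 * INR p + u2 * INR q = 0 ->
  forall x y, (m11 x y * u1 + m12 x y * u2) * INR p + (m21 x y * u1 + m22 x y * u2) * INR q = 0.
Proof.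
  intros Hu x y.
  (* the phase makes the slope of the wave maximal at (x, y) *)
  set (c := - (2 * PI * (INR p * x + INR q * y))).
  pose proof (preserves_solenoidal_dir u1 u2 _ (wave_smooth_on_torus p q c)) as H.
  assert (Hdir : forall x y, u1 * dx (wave p q c) x y + u2 * dy (wave p q c) x y = 0).
  { intros a b. rewrite dx_wave, dy_wave.
    transitivity (2 * PI * cos (2 * PI * (INR p * a + INR q * b) + c)
                  * (u1 * INR p + u2 * INR q)); [ring|rewrite Hu; ring]. }
  specialize (H Hdir x y). rewrite dx_wave, dy_wave in H.
  destruct (columns_solenoidal x y) as [C1 C2].
  rewrite C1, C2 in H.
  replace (2 * PI * (INR p * x + INR q * y) + c) with 0 in H by (unfold c; ring).
  rewrite cos_0 in H. pose proof PI_RGT_0. nra.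
Qed.

Lemma preserves_solenoidal_scalar :
  (forall x y, m12 x y = 0 /\ m21 x y = 0 /\ m22 x y = m11 x y) /\
  (forall x y, m11 x y = m11 0 0).
Proof.
  assert (Hscal : forall x y, m12 x y = 0 /\ m21 x y = 0 /\ m22 x y = m11 x y).
  { intros x y.
    pose proof (preserves_solenoidal_wave 1 0 0 1 ltac:(simpl; ring) x y) as Hx.
    pose proof (preserves_solenoidal_wave 0 1 1 0 ltac:(simpl; ring) x y) as Hy.
    pose proof (preserves_solenoidal_wave 1 1 1 (-1) ltac:(simpl; ring) x y) as Hd.
    simpl in Hx, Hy, Hd. lra. }
  split; auto.
  apply gradient_zero_const; auto; intros x y; destruct (columns_solenoidal x y) as [C1 C2].
  - rewrite <- C1. unfold dx, dy. rewrite (Derive_ext (fun t => m21 x t) (fun _ => 0)).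
    + rewrite Derive_const. ring.
    + intro t; apply Hscal.
  - rewrite <- C2. unfold dx, dy.
    rewrite (Derive_ext (fun t => m12 t y) (fun _ => 0)), Derive_const, Rplus_0_l.
    + apply Derive_ext; intro t; symmetry; apply Hscal.
    + intro t; apply Hscal.
Qed.

End SolenoidalPreserving.

Lemma gdet_smooth g : is_riemannian_metric g -> smooth (gdet g).
Proof.
  intros [[H11 _] [[H12 _] [[H22 _] _]]]. unfold gdet.
  apply smooth_minus; apply smooth_mult; auto.
Qed.

Lemma gdet_pos g x y : is_riemannian_metric g -> 0 < gdet g x y.
Proof. intros Hg; apply Hg. Qed.

Lemma sqrt_gdet_pos g x y : is_riemannian_metric g -> 0 < sqrt (gdet g x y).
Proof. intros Hg; apply sqrt_lt_R0, gdet_pos, Hg. Qed.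

Lemma sqrt_gdet_smooth g : is_riemannian_metric g -> smooth (fun x y => sqrt (gdet g x y)).
Proof. intros Hg; apply smooth_sqrt; [apply Hg|apply gdet_smooth; auto]. Qed.

(* The density [sqrt G g^(-1) w]: [codiff g w] is minus its divergence over [sqrt G]. *)
Definition flux_x (g : metric) (a b : R -> R -> R) : R -> R -> R :=
  fun u v => sqrt (gdet g u v) * ((g22 g u v / gdet g u v) * a u v
                                  - (g12 g u v / gdet g u v) * b u v).
Definition flux_y (g : metric) (a b : R -> R -> R) : R -> R -> R :=
  fun u v => sqrt (gdet g u v) * (- (g12 g u v / gdet g u v) * a u v
                                  + (g11 g u v / gdet g u v) * b u v).

Lemma wcodiff_div g P a b x y :
  wcodiff g P a b x y = - / (P x y * sqrt (gdet g x y)) *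
    divergence (flux_x g (fun u v => P u v * a u v) (fun u v => P u v * b u v))
        (flux_y g (fun u v => P u v * a u v) (fun u v => P u v * b u v)) x y.
Proof. unfold wcodiff, codiff, divergence. rewrite Rinv_mult. unfold flux_x, flux_y. ring. Qed.

(* Inverse of the [P]-weighted flux: the 1-form [g v / (P sqrt G)]. *)
Definition flat_x (g : metric) (P v1 v2 : R -> R -> R) : R -> R -> R :=
  fun x y => (g11 g x y * v1 x y + g12 g x y * v2 x y) / (P x y * sqrt (gdet g x y)).
Definition flat_y (g : metric) (P v1 v2 : R -> R -> R) : R -> R -> R :=
  fun x y => (g12 g x y * v1 x y + g22 g x y * v2 x y) / (P x y * sqrt (gdet g x y)).

Lemma flux_flat g P v1 v2 : is_riemannian_metric g -> (forall x y, 0 < P x y) ->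
  flux_x g (fun u v => P u v * flat_x g P v1 v2 u v) (fun u v => P u v * flat_y g P v1 v2 u v)
    = v1 /\
  flux_y g (fun u v => P u v * flat_x g P v1 v2 u v) (fun u v => P u v * flat_y g P v1 v2 u v)
    = v2.
Proof.
  intros Hg HP. split; apply fun2_ext; intros x y; unfold flux_x, flux_y, flat_x, flat_y;
  pose proof (gdet_pos g x y Hg) as HG;
  pose proof (sqrt_gdet_pos g x y Hg);
  pose proof (sqrt_sqrt (gdet g x y) (Rlt_le _ _ HG)) as Hsq; pose proof (HP x y);
  unfold gdet in *; field_simplify; try lra; rewrite ?Hsq; field; lra.
Qed.

Lemma wcodiff_flat g P v1 v2 : is_riemannian_metric g -> (forall x y, 0 < P x y) ->
  (forall x y, divergence v1 v2 x y = 0) ->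
  forall x y, wcodiff g P (flat_x g P v1 v2) (flat_y g P v1 v2) x y = 0.
Proof.
  intros Hg HP Hdiv x y. rewrite wcodiff_div.
  destruct (flux_flat g P v1 v2 Hg HP) as [-> ->]. rewrite Hdiv. ring.
Qed.

Lemma flat_one_form g P v1 v2 : is_riemannian_metric g -> smooth_on_torus P ->
  (forall x y, 0 < P x y) -> smooth_on_torus v1 -> smooth_on_torus v2 ->
  is_one_form (flat_x g P v1 v2) (flat_y g P v1 v2).
Proof.
  intros Hg [HPs HPp] HP [Hs1 Hp1] [Hs2 Hp2].
  pose proof Hg as [[S11 Q11] [[S12 Q12] [[S22 Q22] _]]].
  assert (Hden : forall x y, 0 < P x y * sqrt (gdet g x y)).
  { intros; apply Rmult_lt_0_compat; auto using sqrt_gdet_pos. }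
  split; split.
  - apply smooth_div; auto using smooth_mult, smooth_plus, sqrt_gdet_smooth.
  - intros x y; unfold flat_x, gdet;
      destruct (Q11 x y) as [-> ->], (Q12 x y) as [-> ->], (Q22 x y) as [-> ->],
        (HPp x y) as [-> ->], (Hp1 x y) as [-> ->], (Hp2 x y) as [-> ->]; auto.
  - apply smooth_div; auto using smooth_mult, smooth_plus, sqrt_gdet_smooth.
  - intros x y; unfold flat_y, gdet;
      destruct (Q11 x y) as [-> ->], (Q12 x y) as [-> ->], (Q22 x y) as [-> ->],
        (HPp x y) as [-> ->], (Hp1 x y) as [-> ->], (Hp2 x y) as [-> ->]; auto.
Qed.

(* The matrix [Q sqrt Gt / (P sqrt G) * gt^(-1) g], written as a positive scale
   times [adj(gt) g]: it maps the [P]-weighted [g]-flux of a 1-form to its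
   [Q]-weighted [gt]-flux. *)
Definition transfer_scale (g gt : metric) (P Q : R -> R -> R) : R -> R -> R :=
  fun x y => sqrt (gdet gt x y) * Q x y / (gdet gt x y * P x y * sqrt (gdet g x y)).
Definition transfer11 g gt P Q : R -> R -> R := fun x y =>
  transfer_scale g gt P Q x y * (g22 gt x y * g11 g x y - g12 gt x y * g12 g x y).
Definition transfer12 g gt P Q : R -> R -> R := fun x y =>
  transfer_scale g gt P Q x y * (g22 gt x y * g12 g x y - g12 gt x y * g22 g x y).
Definition transfer21 g gt P Q : R -> R -> R := fun x y =>
  transfer_scale g gt P Q x y * (g11 gt x y * g12 g x y - g12 gt x y * g11 g x y).
Definition transfer22 g gt P Q : R -> R -> R := fun x y =>
  transfer_scale g gt P Q x y * (g11 gt x y * g22 g x y - g12 gt x y * g12 g x y).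

Section Transfer.

Variables (g gt : metric) (P Q : R -> R -> R).
Hypotheses (Hg : is_riemannian_metric g) (Hgt : is_riemannian_metric gt)
  (HPs : smooth_on_torus P) (HQs : smooth_on_torus Q)
  (HP : forall x y, 0 < P x y) (HQ : forall x y, 0 < Q x y).

Lemma transfer_scale_pos x y : 0 < transfer_scale g gt P Q x y.
Proof.
  unfold transfer_scale. pose proof (gdet_pos gt x y Hgt).
  pose proof (sqrt_gdet_pos g x y Hg). pose proof (sqrt_gdet_pos gt x y Hgt).
  pose proof (HP x y). pose proof (HQ x y).
  apply Rdiv_lt_0_compat; repeat apply Rmult_lt_0_compat; auto.
Qed.

Lemma transfer_smooth :
  smooth (transfer11 g gt P Q) /\ smooth (transfer12 g gt P Q) /\
  smooth (transfer21 g gt P Q) /\ smooth (transfer22 g gt P Q).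
Proof.
  pose proof Hg as [[S11 _] [[S12 _] [[S22 _] _]]].
  pose proof Hgt as [[T11 _] [[T12 _] [[T22 _] _]]].
  assert (Hscale : smooth (transfer_scale g gt P Q)).
  { apply smooth_div.
    - intros x y. pose proof (gdet_pos gt x y Hgt).
      pose proof (sqrt_gdet_pos g x y Hg). pose proof (HP x y).
      repeat apply Rmult_lt_0_compat; auto.
    - apply smooth_mult; [apply sqrt_gdet_smooth|apply HQs]; auto.
    - repeat apply smooth_mult; auto using gdet_smooth, sqrt_gdet_smooth; apply HPs. }
  repeat split; apply smooth_mult; auto; apply smooth_minus; apply smooth_mult; auto.
Qed.

Lemma flux_flat_transfer v1 v2 :
  flux_x gt (fun u v => Q u v * flat_x g P v1 v2 u v) (fun u v => Q u v * flat_y g P v1 v2 u v)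
    = (fun x y => transfer11 g gt P Q x y * v1 x y + transfer12 g gt P Q x y * v2 x y) /\
  flux_y gt (fun u v => Q u v * flat_x g P v1 v2 u v) (fun u v => Q u v * flat_y g P v1 v2 u v)
    = (fun x y => transfer21 g gt P Q x y * v1 x y + transfer22 g gt P Q x y * v2 x y).
Proof.
  split; apply fun2_ext; intros x y;
  unfold flux_x, flux_y, flat_x, flat_y, transfer11, transfer12, transfer21, transfer22,
    transfer_scale;
  pose proof (gdet_pos gt x y Hgt);
  pose proof (sqrt_gdet_pos g x y Hg); pose proof (sqrt_gdet_pos gt x y Hgt);
  pose proof (HP x y); pose proof (HQ x y);
  field; repeat split; lra.
Qed.

Lemma ker_incl_preserves_solenoidal : ker_incl g gt P Q ->
  forall v1 v2, smooth_on_torus v1 -> smooth_on_torus v2 ->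
  (forall x y, divergence v1 v2 x y = 0) ->
  forall x y,
  divergence (fun x y => transfer11 g gt P Q x y * v1 x y + transfer12 g gt P Q x y * v2 x y)
      (fun x y => transfer21 g gt P Q x y * v1 x y + transfer22 g gt P Q x y * v2 x y) x y = 0.
Proof.
  intros Hk v1 v2 Hv1 Hv2 Hdiv x y.
  pose proof (Hk _ _ (flat_one_form g P v1 v2 Hg HPs HP Hv1 Hv2)
                (wcodiff_flat g P v1 v2 Hg HP Hdiv) x y) as H.
  rewrite wcodiff_div in H. destruct (flux_flat_transfer v1 v2) as [E1 E2]. rewrite E1, E2 in H.
  assert (Hweight : 0 < Q x y * sqrt (gdet gt x y)).
  { apply Rmult_lt_0_compat; auto using sqrt_gdet_pos. }
  apply Rmult_integral in H as [H|H]; auto.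
  apply Ropp_eq_0_compat in H. rewrite Ropp_involutive in H.
  exfalso; apply (Rinv_neq_0_compat _ (Rgt_not_eq _ _ Hweight) H).
Qed.

Definition conformal_factor (x y : R) : R := g11 gt x y / g11 g x y.

Lemma conformal_of_transfer_scalar :
  (forall x y, transfer12 g gt P Q x y = 0 /\ transfer21 g gt P Q x y = 0 /\
               transfer22 g gt P Q x y = transfer11 g gt P Q x y) ->
  forall x y, g11 gt x y = conformal_factor x y * g11 g x y /\
              g12 gt x y = conformal_factor x y * g12 g x y /\
              g22 gt x y = conformal_factor x y * g22 g x y.
Proof.
  intros Hscal x y. destruct (Hscal x y) as [E12 [E21 E22]].
  unfold transfer11, transfer12, transfer21, transfer22 in *.
  pose proof (transfer_scale_pos x y) as Hs.
  pose proof Hg as (_ & _ & _ & Hg11 & _). specialize (Hg11 x y).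
  set (s := transfer_scale g gt P Q x y) in *. unfold conformal_factor.
  assert (E21' : g11 gt x y * g12 g x y - g12 gt x y * g11 g x y = 0).
  { apply (Rmult_eq_reg_l s); lra. }
  assert (E22' : g11 gt x y * g22 g x y - g22 gt x y * g11 g x y = 0).
  { apply (Rmult_eq_reg_l s); lra. }
  repeat split.
  - field; lra.
  - apply (Rmult_eq_reg_l (g11 g x y)); [|lra]. field_simplify; lra.
  - apply (Rmult_eq_reg_l (g11 g x y)); [|lra]. field_simplify; lra.
Qed.

Lemma conformal_factor_pos x y : 0 < conformal_factor x y.
Proof. apply Rdiv_lt_0_compat; [apply Hgt|apply Hg]. Qed.

Lemma conformal_factor_smooth_on_torus : smooth_on_torus conformal_factor.
Proof.
  pose proof Hg as [[S11 Q11] [_ [_ [G11 _]]]]. pose proof Hgt as [[T11 R11] _].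
  split; [apply smooth_div; auto|].
  intros x y; unfold conformal_factor; destruct (Q11 x y) as [-> ->], (R11 x y) as [-> ->]; auto.
Qed.

Lemma transfer11_conformal :
  (forall x y, g11 gt x y = conformal_factor x y * g11 g x y /\
               g12 gt x y = conformal_factor x y * g12 g x y /\
               g22 gt x y = conformal_factor x y * g22 g x y) ->
  forall x y, transfer11 g gt P Q x y = Q x y / P x y.
Proof.
  intros Hconf x y. destruct (Hconf x y) as [L11 [L12 L22]].
  pose proof (conformal_factor_pos x y) as Hl. set (l := conformal_factor x y) in *.
  pose proof (sqrt_gdet_pos g x y Hg) as Hsg. pose proof (HP x y).
  assert (Hdet : gdet gt x y = l * l * gdet g x y).
  { unfold gdet; rewrite L11, L12, L22; ring. }
  assert (Hsqrt : sqrt (gdet gt x y) = l * sqrt (gdet g x y)).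
  { rewrite Hdet, sqrt_mult_alt, sqrt_square; nra. }
  pose proof (sqrt_sqrt (gdet g x y) (Rlt_le _ _ (gdet_pos g x y Hg))) as Hsq.
  unfold transfer11, transfer_scale. rewrite Hsqrt, Hdet, L12, L22.
  replace (l * g22 g x y * g11 g x y - l * g12 g x y * g12 g x y) with (l * gdet g x y)
    by (unfold gdet; ring).
  rewrite <- Hsq. field. rewrite Hsq. repeat split; lra.
Qed.

End Transfer.

Theorem proposition7 (g gt : metric) (P Q : R -> R -> R) :
  is_riemannian_metric g -> is_riemannian_metric gt ->
  smooth_on_torus P -> smooth_on_torus Q ->
  (forall x y, 0 < P x y) -> (forall x y, 0 < Q x y) ->
  ker_incl g gt P Q ->
  conformally_equivalent g gt /\ exists c : R, 0 < c /\ forall x y, P x y = c * Q x y.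
Proof.
  intros Hg Hgt HPs HQs HP HQ Hk.
  destruct (transfer_smooth g gt P Q Hg Hgt HPs HQs HP) as [M11 [M12 [M21 M22]]].
  destruct (preserves_solenoidal_scalar _ _ _ _ M11 M12 M21 M22
              (ker_incl_preserves_solenoidal g gt P Q Hg Hgt HPs HP HQ Hk))
    as [Hscal Hconst].
  pose proof (conformal_of_transfer_scalar g gt P Q Hg Hgt HP HQ Hscal) as Hconf.
  split.
  - exists (conformal_factor g gt). split; [apply conformal_factor_smooth_on_torus; auto|].
    split; [apply conformal_factor_pos; auto|exact Hconf].
  - exists (P 0 0 / Q 0 0). split; [apply Rdiv_lt_0_compat; auto|].
    intros x y. pose proof (Hconst x y) as Hxy.
    rewrite !(transfer11_conformal g gt P Q Hg Hgt HP Hconf) in Hxy.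
    pose proof (HP x y). pose proof (HQ x y). pose proof (HP 0 0). pose proof (HQ 0 0).
    assert (Q x y * P 0 0 = Q 0 0 * P x y) by (field_simplify_eq in Hxy; lra).
    field_simplify_eq; nra.
Qed.
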